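(* Let $f$ be a $T$-norm with an additive generator $\mu$ such that for all $0\leq x\leq y\leq 1$ and all $h\geq 0$ with $y+h\leq 1$, $\mu(x)-\mu(x+h)\geq \mu(y)-\mu(y+h)$. Then $f$ satisfies property $A$.
   Context: A $T$-norm is a function $f:[0,1]^2\to[0,1]$ that is commutative, associative, monotonic ($x\leq y$ implies $f(x,z)\leq f(y,z)$) and satisfies $f(x,1)=x$. An additive generator of $f$ is a strictly decreasing function $\mu:[0,1]\to[0,\infty]$, right-continuous at $0$, with $\mu(1)=0$, such that for all $x,y\in[0,1]$, $\mu(x)+\mu(y)\in \mathrm{Range}(\mu)\cup[\mu(0),\infty]$ and $f(x,y)=\mu^{(-1)}(\mu(x)+\mu(y))$, where $\mu^{(-1)}:[0,\infty]\to[0,1]$ is the pseudo-inverse $\mu^{(-1)}(t)=\sup\{x\in[0,1]:\mu(x)>t\}$ (with $\sup\emptyset=0$). A function $f:[0,1]^2\to[0,1]$ satisfies property $A$ if for all $0\leq x\leq y\leq z\leq w\leq 1$, $w+x\leq y+z$ implies $f(x,w)\leq f(y,z)$. *)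

From Stdlib Require Import Reals.
From Coquelicot Require Import Coquelicot.
Open Scope R_scope.

Definition I01 (x : R) : Prop := 0 <= x <= 1.

(* A T-norm: a function on [0,1]^2 (represented as R -> R -> R, only its values
   on [0,1]^2 matter) with values in [0,1]. *)
Definition is_tnorm (f : R -> R -> R) : Prop :=
  (forall x y, I01 x -> I01 y -> I01 (f x y)) /\
  (forall x y, I01 x -> I01 y -> f x y = f y x) /\
  (forall x y z, I01 x -> I01 y -> I01 z -> f x (f y z) = f (f x y) z) /\
  (forall x y z, I01 x -> I01 y -> I01 z -> x <= y -> f x z <= f y z) /\
  (forall x, I01 x -> f x 1 = x).

(* Pseudo-inverse mu^(-1)(t) = sup {x in [0,1] | mu x > t}, with sup of the empty set = 0. *)
Definition pseudo_inv (mu : R -> Rbar) (t : Rbar) : R :=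
  match Lub_Rbar (fun x => I01 x /\ Rbar_lt t (mu x)) with
  | Finite r => r
  | _ => 0
  end.

Definition additive_generator (mu : R -> Rbar) (f : R -> R -> R) : Prop :=
  (forall x, I01 x -> Rbar_le (Finite 0) (mu x)) /\
  (forall x y, I01 x -> I01 y -> x < y -> Rbar_lt (mu y) (mu x)) /\
  filterlim mu (at_right 0) (Rbar_locally (mu 0)) /\
  mu 1 = Finite 0 /\
  (forall x y, I01 x -> I01 y ->
     (exists z, I01 z /\ mu z = Rbar_plus (mu x) (mu y)) \/
     Rbar_le (mu 0) (Rbar_plus (mu x) (mu y))) /\
  (forall x y, I01 x -> I01 y -> f x y = pseudo_inv mu (Rbar_plus (mu x) (mu y))).

Definition property_A (f : R -> R -> R) : Prop :=
  forall x y z w, 0 <= x -> x <= y -> y <= z -> z <= w -> w <= 1 ->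
    w + x <= y + z -> f x w <= f y z.

(** The generator turns property A into an inequality between sums of generator
    values, since the pseudo-inverse is antitone.  For [w + x <= y + z] put
    [h := w - z]; the hypothesis compares the decrement of [mu] on [[z, w]] with
    the one on [[x, x + h]], and [x + h <= y] gives
    [mu y + mu z <= mu (x + h) + mu z <= mu x + mu w]. *)
From Stdlib Require Import Reals Lra.
From Coquelicot Require Import Coquelicot.
Open Scope R_scope.

Section PseudoInverse.

Variable mu : R -> Rbar.

Let level_set (t : Rbar) (x : R) : Prop := I01 x /\ Rbar_lt t (mu x).

Lemma Lub_level_set_le1 (t : Rbar) : Rbar_le (Lub_Rbar (level_set t)) 1.
Proof.
  apply (proj2 (Lub_Rbar_correct (level_set t))).
  now intros u [[_ Hu1] _].
Qed.

Lemma pseudo_inv_ge0 (t : Rbar) : 0 <= pseudo_inv mu t.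
Proof.
  unfold pseudo_inv; fold (level_set t).
  destruct (Lub_Rbar_correct (level_set t)) as [Hub Hleast].
  destruct (Lub_Rbar (level_set t)) as [r| |]; try lra.
  destruct (Rle_lt_dec 0 r) as [Hr | Hr]; [exact Hr |].
  (* [r < 0] forces the level set to be empty, so [r - 1] would be a smaller bound. *)
  assert (Hub' : is_ub_Rbar (level_set t) (r - 1)).
  { intros u Hu. specialize (Hub u Hu). destruct Hu as [[Hu0 _] _].
    simpl in Hub. lra. }
  specialize (Hleast (r - 1) Hub'). simpl in Hleast. lra.
Qed.

Lemma pseudo_inv_antitone (t1 t2 : Rbar) :
  Rbar_le t1 t2 -> pseudo_inv mu t2 <= pseudo_inv mu t1.
Proof.
  intro Ht.
  assert (Hsub : Rbar_le (Lub_Rbar (level_set t2)) (Lub_Rbar (level_set t1))).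
  { apply (is_lub_Rbar_subset (level_set t1) (level_set t2));
      try apply Lub_Rbar_correct.
    intros u [Iu Hu]. split; [exact Iu |]. exact (Rbar_le_lt_trans _ _ _ Ht Hu). }
  pose proof (pseudo_inv_ge0 t1) as H1.
  pose proof (Lub_level_set_le1 t1) as B1.
  unfold pseudo_inv in *; fold (level_set t1) (level_set t2) in *.
  destruct (Lub_Rbar (level_set t2)) as [r2| |];
  destruct (Lub_Rbar (level_set t1)) as [r1| |];
  simpl in *; easy || lra.
Qed.

End PseudoInverse.

Lemma generator_antitone (mu : R -> Rbar) (f : R -> R -> R) :
  additive_generator mu f ->
  forall s t, I01 s -> I01 t -> s <= t -> Rbar_le (mu t) (mu s).
Proof.
  intros [_ [Hdec _]] s t Is It Hst.
  destruct (Rle_lt_or_eq_dec _ _ Hst) as [Hlt | <-].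
  - exact (Rbar_lt_le _ _ (Hdec s t Is It Hlt)).
  - apply Rbar_le_refl.
Qed.

(* The chain [0 <= d <= c <= b <= e <= a] makes every subtraction below
   well defined: either [a = +oo] or all five values are finite. *)
Lemma Rbar_plus_le_of_minus_le (a b c d e : Rbar) :
  Rbar_le 0 d -> Rbar_le d c -> Rbar_le c b -> Rbar_le b e -> Rbar_le e a ->
  Rbar_le (Rbar_minus c d) (Rbar_minus a e) ->
  Rbar_le (Rbar_plus b c) (Rbar_plus a d).
Proof.
  destruct a as [a| |], e as [e| |], b as [b| |], c as [c| |], d as [d| |];
  simpl; easy || lra.
Qed.

Theorem theorem5 (f : R -> R -> R) (mu : R -> Rbar) :
  is_tnorm f ->
  additive_generator mu f ->
  (forall x y h, 0 <= x -> x <= y -> y <= 1 -> 0 <= h -> y + h <= 1 ->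
     Rbar_le (Rbar_minus (mu y) (mu (y + h))) (Rbar_minus (mu x) (mu (x + h)))) ->
  property_A f.
Proof.
  intros _ Hgen Hdecrement x y z w H0x Hxy Hyz Hzw Hw1 Hsum.
  pose proof (generator_antitone mu f Hgen) as Hanti.
  destruct Hgen as [Hpos [_ [_ [_ [_ Hf]]]]].
  assert (I01 x /\ I01 y /\ I01 z /\ I01 w /\ I01 (x + (w - z)))
    as (Ix & Iy & Iz & Iw & Ixh) by (unfold I01; lra).
  rewrite (Hf x w Ix Iw), (Hf y z Iy Iz).
  apply pseudo_inv_antitone.
  apply Rbar_plus_le_of_minus_le with (e := mu (x + (w - z))).
  - exact (Hpos w Iw).
  - exact (Hanti z w Iz Iw Hzw).
  - exact (Hanti y z Iy Iz Hyz).
  - apply Hanti; [assumption .. | lra].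
  - apply Hanti; [assumption .. | lra].
  - pose proof (Hdecrement x z (w - z)) as Hxz.
    replace (z + (w - z)) with w in Hxz by ring.
    apply Hxz; lra.
Qed.
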